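(* (1) For any poset $P$ and any subset $P_0\subseteq P$ (with the induced order), no isotone map $P_0\to\mathrm{Down}(P)$ is surjective. (2) More strongly, for any poset $P_0$ and any upper semilattice $T$ containing $\mathrm{Down}(P_0)$ as an upper subsemilattice, there is no isotone map $f:P_0\to T$ such that $f(P_0)$ generates $T$ as an upper semilattice.
   Context: For a poset $P$, a downset of $P$ is a subset $d$ with $x\le y\in d\Rightarrow x\in d$. $\mathrm{Down}(P)$ denotes the lattice of all downsets of $P$ (including $\emptyset$), ordered by inclusion, with join given by union. A map of posets is isotone if it preserves $\le$. *)

From HB Require Import structures.
From mathcomp Require Import all_boot all_order.
Set Implicit Arguments. Unset Strict Implicit. Unset Printing Implicit Defensive.
Import Order.TTheory.
Local Open Scope order_scope.

Definition downset (disp : Order.disp_t) (P : porderType disp) (D : P -> Prop) : Prop :=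
  forall x y : P, x <= y -> D y -> D x.

Definition setU_ (A : Type) (X Y : A -> Prop) : A -> Prop := fun a => X a \/ Y a.
Definition subset_ (A : Type) (X Y : A -> Prop) : Prop := forall a, X a -> Y a.

Inductive gen_join (disp : Order.disp_t) (T : joinSemilatticeType disp) (S : T -> Prop)
  : T -> Prop :=
  | gen_join_base : forall t, S t -> gen_join S t
  | gen_join_join : forall t u, gen_join S t -> gen_join S u -> gen_join S (t `|` u).

(* (1) is Cantor's diagonal argument: the downset generated by the x in P0
   with x not in f x is not in the image of f.
   (2) Call a downset C closed when f z <= e C forces z in C, and let K be the
   least closed downset. If e K were generated by the image of f, it would be
   the join of finitely many f x with x in K. Removing the upsets of these x
   from K one at a time (each removal leaves a non-closed downset, which
   exhibits an f x below its image) yields a w in K such that K minus the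
   upset of w still bounds all of them, hence contains K, which is absurd. *)
From HB Require Import structures.
From mathcomp Require Import all_boot all_order.
From Stdlib Require Import Classical FunctionalExtensionality PropExtensionality.
Import Order.TTheory.
Local Open Scope order_scope.

Lemma no_isotone_surjection_onto_downsets (disp : Order.disp_t)
    (P : porderType disp) (P0 : P -> Prop) (f : P -> (P -> Prop)) :
  (forall x y, P0 x -> P0 y -> x <= y -> subset_ (f x) (f y)) ->
  ~ (forall D : P -> Prop, downset D -> exists2 x, P0 x & f x = D).
Proof.
move=> f_mono f_onto.
pose D y := exists x, [/\ P0 x, y <= x & ~ f x x].
have D_down : downset D.
  by move=> y z yz [x [P0x zx nfxx]]; exists x; split=> //; apply: le_trans zx.
have [a P0a faD] := f_onto D D_down.
have nfaa : ~ f a a.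
  move=> faa; have [x [P0x ax nfxx]] : D a by rewrite -faD.
  by apply/nfxx/(f_mono a x) => //; rewrite faD; exists x.
by apply: (nfaa); rewrite faD; exists a.
Qed.

Lemma gen_join_image_lub {disp : Order.disp_t} {T : joinSemilatticeType disp}
    {A : Type} {f : A -> T} {t : T} :
  gen_join (fun u => exists x, f x = u) t ->
  exists2 s : seq A, ~~ nilp s & forall u, (t <= u) = all (fun x => f x <= u) s.
Proof.
elim=> [_ [x <-] | t1 t2 _ [s1 s1n0 lub1] _ [s2 _ lub2]].
  by exists [:: x] => // u /=; rewrite andbT.
exists (s1 ++ s2); first by case: s1 s1n0 {lub1}.
by move=> u; rewrite leUx all_cat lub1 lub2.
Qed.

Section DownsetSubsemilattice.
Variables (disp0 : Order.disp_t) (P0 : porderType disp0).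
Variables (dispT : Order.disp_t) (T : joinSemilatticeType dispT).
Variable e : (P0 -> Prop) -> T.
Hypothesis e_inj : forall D D', downset D -> downset D' -> e D = e D' -> D = D'.
Hypothesis eU : forall D D', downset D -> downset D' -> e (setU_ D D') = e D `|` e D'.
Variable f : P0 -> T.
Hypothesis f_mono : forall x y, x <= y -> f x <= f y.

Lemma downsetU (D D' : P0 -> Prop) : downset D -> downset D' -> downset (setU_ D D').
Proof.
by move=> dD dD' x y xy [Dy | D'y]; [left; apply: dD xy Dy | right; apply: dD' xy D'y].
Qed.

Lemma le_e_subset (D D' : P0 -> Prop) :
  downset D -> downset D' -> e D <= e D' <-> subset_ D D'.
Proof.
move=> dD dD'; have U_eq : e D <= e D' <-> setU_ D D' = D'.
  split=> [DD' | <-]; last by rewrite eU ?leUl.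
  by apply: e_inj; rewrite ?eU ?(join_r DD') //; apply: downsetU.
rewrite U_eq; split=> [<- x Dx | sDD']; first by left.
apply: functional_extensionality => x; apply: propositional_extensionality.
by split=> [[/sDD' | ] | ]; [| | right].
Qed.

Definition closed (C : P0 -> Prop) := forall z, f z <= e C -> C z.

Definition core (y : P0) := forall C, downset C -> closed C -> C y.

Lemma downset_core : downset core.
Proof. by move=> x y xy coy C dC cC; apply: dC xy (coy C dC cC). Qed.

Lemma closed_core : closed core.
Proof.
move=> z fz C dC cC; apply/cC/(le_trans fz).
by apply/le_e_subset => // [|y /(_ C dC cC)//]; apply: downset_core.
Qed.

Definition avoid (s : seq P0) (y : P0) := core y /\ ~~ has (fun x => x <= y) s.

Lemma downset_avoid s : downset (avoid s).
Proof.
move=> x y xy [coy /hasPn ny]; split; first exact: downset_core xy coy.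
by apply/hasPn => z /ny; apply: contra => /le_trans; apply.
Qed.

Lemma le_e_avoid s t : {subset s <= t} -> e (avoid t) <= e (avoid s).
Proof.
move=> st; apply/le_e_subset; try exact: downset_avoid.
by move=> y [coy /hasPn nty]; split=> //; apply/hasPn => x /st /nty.
Qed.

Lemma le_e_avoid_core s : e (avoid s) <= e core.
Proof. by apply/le_e_subset => [||y []] //; [apply: downset_avoid | apply: downset_core]. Qed.

(* avoid s misses the elements of s, so it is not closed: some f z lies below
   e (avoid s), and z must lie above some x in s. *)
Lemma avoid_bounds_elem {s : seq P0} :
  ~~ nilp s -> {in s, forall x, core x} ->
  exists2 x, x \in s & f x <= e (avoid s).
Proof.
case: s => [// | x0 s0] _ s_core.
have /not_all_ex_not [z] : ~ closed (avoid (x0 :: s0)).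
  move=> closed_avoid.
  have [_] := s_core x0 (mem_head _ _) _ (downset_avoid (x0 :: s0)) closed_avoid.
  by rewrite /= lexx.
move=> nclosed_z; have [fz nz] := imply_to_and _ _ nclosed_z.
have coz : core z := closed_core z (le_trans fz (le_e_avoid_core _)).
have /hasP [x xs xz] : has (fun x => x <= z) (x0 :: s0).
  by apply: contraT => nh; case: nz; split.
by exists x => //; exact: le_trans (f_mono _ _ xz) fz.
Qed.

Lemma core_avoid_witness {s : seq P0} :
  ~~ nilp s -> {in s, forall x, core x} ->
  exists2 w, w \in s & {in s, forall y, f y <= e (avoid [:: w])}.
Proof.
have [n] := ubnP (size s); elim: n s => // n IH s size_s sn0 s_core.
have [x xs fx] := avoid_bounds_elem sn0 s_core.
have fx_avoid w : w \in s -> f x <= e (avoid [:: w]).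
  by move=> ws; apply/(le_trans fx)/le_e_avoid => y; rewrite inE => /eqP ->.
have s_eq y : y \in s -> y = x \/ y \in rem x s.
  by case: (eqVneq y x) => [-> | yx ys]; [left | right; apply: rem_mem].
have [/nilP rem_nil | rem_n0] := boolP (nilp (rem x s)).
  by exists x => // y /s_eq [-> | ]; [apply: fx_avoid | rewrite rem_nil].
have size_rem_lt : (size (rem x s) < n)%N.
  by rewrite size_rem // -ltnS prednK // lt0n; exact: sn0.
have [w ws' fw] := IH _ size_rem_lt rem_n0 (fun y ys' => s_core y (mem_rem ys')).
exists w => [| y /s_eq [-> | /fw //]]; first exact: mem_rem ws'.
exact: fx_avoid _ (mem_rem ws').
Qed.

Lemma not_gen_join_image : ~ (forall t : T, gen_join (fun u => exists x, f x = u) t).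
Proof.
move=> gen; have [s sn0 lub] := gen_join_image_lub (gen (e core)).
have s_core : {in s, forall x, core x}.
  by have := lub (e core); rewrite lexx => /esym/allP fs x /fs /closed_core.
have [w ws fw] := core_avoid_witness sn0 s_core.
have sub : subset_ core (avoid [:: w]).
  apply/le_e_subset; [exact: downset_core | exact: downset_avoid | ].
  by rewrite lub; apply/allP.
by have [_] := sub w (s_core w ws); rewrite /= lexx.
Qed.

End DownsetSubsemilattice.

Theorem corollary3p2 :
  (* (1) no isotone surjection P0 -> Down(P), for P0 a subset of P with the induced order *)
  (forall (disp : Order.disp_t) (P : porderType disp) (P0 : P -> Prop)
          (f : P -> (P -> Prop)),
      (forall x, P0 x -> downset (f x)) ->
      (forall x y, P0 x -> P0 y -> x <= y -> subset_ (f x) (f y)) ->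
      ~ (forall D : P -> Prop, downset D -> exists2 x, P0 x & f x = D))
  /\
  (* (2) Down(P0) embedded in T as an upper subsemilattice via e;
         no isotone f : P0 -> T whose image generates T as an upper semilattice *)
  (forall (disp0 : Order.disp_t) (P0 : porderType disp0)
          (dispT : Order.disp_t) (T : joinSemilatticeType dispT)
          (e : (P0 -> Prop) -> T),
      (forall D D', downset D -> downset D' -> e D = e D' -> D = D') ->
      (forall D D', downset D -> downset D' -> e (setU_ D D') = e D `|` e D') ->
      forall f : P0 -> T,
        (forall x y, x <= y -> f x <= f y) ->
        ~ (forall t : T, gen_join (fun u => exists x, f x = u) t)).
Proof.
split=> [disp P P0 f _ | disp0 P0 dispT T e e_inj eU f f_mono].
  exact: no_isotone_surjection_onto_downsets.
exact: (not_gen_join_image _ _ _ _ _ e_inj eU _ f_mono).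
Qed.
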